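(* Let $G$ be a countably infinite graph. (1) $G$ is HM-homogeneous iff it is HI-homogeneous iff it is HB-homogeneous iff it is HA-homogeneous iff $G\cong K_\omega$. (2) $G$ is MI-homogeneous iff it is MA-homogeneous iff $G\cong K_\omega$ or $G\cong I_\omega$.
   Context: All graphs are undirected and loopless; subgraphs are induced. A homomorphism maps adjacent vertices to adjacent vertices; a monomorphism is an injective homomorphism. For $\mathrm{X}\in\{\mathrm{H},\mathrm{M}\}$ an X-morphism is a homomorphism or monomorphism, respectively. For $\mathrm{Y}\in\{\mathrm{I},\mathrm{A},\mathrm{B},\mathrm{M}\}$, a Y-morphism $G\to G$ is, respectively, a self-embedding (injective map preserving adjacency and non-adjacency), an automorphism, a bijective endomorphism, or an injective endomorphism. $G$ is XY-homogeneous if every X-morphism between finite induced subgraphs of $G$ is the restriction of a Y-morphism $G\to G$. $K_\omega$ is the countable complete graph and $I_\omega$ the countable edgeless graph. *)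

From Stdlib Require Import List.

Definition is_graph {V : Type} (adj : V -> V -> Prop) : Prop :=
  (forall x y, adj x y -> adj y x) /\ (forall x, ~ adj x x).

Definition bijective_map {A B : Type} (f : A -> B) : Prop :=
  (forall x y, f x = f y -> x = y) /\ (forall b, exists a, f a = b).

Definition countably_infinite (V : Type) : Prop :=
  exists f : nat -> V, bijective_map f.

(* A finite set of vertices (the vertex set of a finite induced subgraph). *)
Definition finite_set {V : Type} (A : V -> Prop) : Prop :=
  exists l : list V, forall x, A x <-> In x l.

(* Kinds of local morphisms (X) and global morphisms (Y). *)
Inductive XKind := XH | XM.
Inductive YKind := YI | YA | YB | YM.

(* f, restricted to A, is an X-morphism from the induced subgraph G[A]
   to the induced subgraph G[B]. *)
Definition local_morph {V : Type} (adj : V -> V -> Prop) (X : XKind)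
  (A B : V -> Prop) (f : V -> V) : Prop :=
  (forall x, A x -> B (f x)) /\
  (forall x y, A x -> A y -> adj x y -> adj (f x) (f y)) /\
  match X with
  | XH => True
  | XM => forall x y, A x -> A y -> f x = f y -> x = y
  end.

Definition global_morph {V : Type} (adj : V -> V -> Prop) (Y : YKind)
  (g : V -> V) : Prop :=
  match Y with
  | YI => (forall x y, g x = g y -> x = y) /\ (forall x y, adj x y <-> adj (g x) (g y))
  | YA => bijective_map g /\ (forall x y, adj x y <-> adj (g x) (g y))
  | YB => bijective_map g /\ (forall x y, adj x y -> adj (g x) (g y))
  | YM => (forall x y, g x = g y -> x = y) /\ (forall x y, adj x y -> adj (g x) (g y))
  end.

Definition XY_homogeneous {V : Type} (adj : V -> V -> Prop) (X : XKind) (Y : YKind) : Prop :=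
  forall (A B : V -> Prop) (f : V -> V),
    finite_set A -> finite_set B -> local_morph adj X A B f ->
    exists g : V -> V, global_morph adj Y g /\ (forall x, A x -> g x = f x).

Definition graph_iso {V W : Type} (adjV : V -> V -> Prop) (adjW : W -> W -> Prop) : Prop :=
  exists h : V -> W, bijective_map h /\ (forall x y, adjV x y <-> adjW (h x) (h y)).

Definition K_omega : nat -> nat -> Prop := fun x y => x <> y.
Definition I_omega : nat -> nat -> Prop := fun _ _ => False.

(* An H-morphism may collapse a non-edge {u, v} onto a single vertex, which no
   injective global morphism extends; so H-homogeneity forces completeness.
   Likewise an M-morphism may send a non-edge onto an edge, which no
   self-embedding extends; so MI-homogeneity forces the graph to be complete
   or edgeless.  Conversely, in a complete or edgeless graph every bijection of
   the vertices is an automorphism, and every injection between finite sets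
   extends to a bijection (compose transpositions), while in a loopless
   complete graph homomorphisms are injective. *)

From Stdlib Require Import List Setoid Classical ClassicalEpsilon.

Definition swap {V : Type} (a c x : V) : V :=
  if excluded_middle_informative (x = a) then c
  else if excluded_middle_informative (x = c) then a else x.

Lemma swap_left {V : Type} (a c : V) : swap a c a = c.
Proof.
  unfold swap; destruct (excluded_middle_informative (a = a)); congruence.
Qed.

Lemma swap_other {V : Type} (a c x : V) : x <> a -> x <> c -> swap a c x = x.
Proof.
  intros Ha Hc; unfold swap.
  destruct (excluded_middle_informative (x = a)); [congruence|].
  destruct (excluded_middle_informative (x = c)); congruence.
Qed.

Lemma swap_involutive {V : Type} (a c x : V) : swap a c (swap a c x) = x.
Proof.
  unfold swap.
  destruct (excluded_middle_informative (x = a)) as [Ha|Ha].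
  - destruct (excluded_middle_informative (c = a)); [congruence|].
    destruct (excluded_middle_informative (c = c)); congruence.
  - destruct (excluded_middle_informative (x = c)) as [Hc|Hc].
    + destruct (excluded_middle_informative (a = a)); congruence.
    + destruct (excluded_middle_informative (x = a)); [congruence|].
      destruct (excluded_middle_informative (x = c)); congruence.
Qed.

Lemma bijective_map_swap_comp {V : Type} (g : V -> V) (a c : V) :
  bijective_map g -> bijective_map (fun x => g (swap a c x)).
Proof.
  intros [g_inj g_surj]; split.
  - intros x y Exy; apply g_inj in Exy.
    rewrite <- (swap_involutive a c x), <- (swap_involutive a c y), Exy.
    reflexivity.
  - intros b; destruct (g_surj b) as [d <-].
    exists (swap a c d); rewrite swap_involutive; reflexivity.
Qed.

Lemma injective_on_list_extends_to_bijection {V : Type} (f : V -> V) (l : list V) :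
  (forall x y, In x l -> In y l -> f x = f y -> x = y) ->
  exists g, bijective_map g /\ forall x, In x l -> g x = f x.
Proof.
  induction l as [|a l IH]; intros f_inj.
  - exists (fun x => x); split; [|intros x []].
    split; [auto|intros b; exists b; reflexivity].
  - destruct IH as [g [g_bij g_ext]].
    { intros x y Hx Hy; apply f_inj; simpl; auto. }
    destruct (proj2 g_bij (f a)) as [c gc].
    exists (fun x => g (swap a c x)); split; [apply bijective_map_swap_comp, g_bij|].
    intros x [<-|Hx]; [rewrite swap_left; exact gc|].
    destruct (classic (x = a)) as [->|Hxa]; [rewrite swap_left; exact gc|].
    assert (Hxc : x <> c).
    { intros ->; apply Hxa, f_inj; simpl; auto.
      rewrite <- g_ext by exact Hx; exact gc. }
    rewrite swap_other by assumption; apply g_ext, Hx.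
Qed.

Lemma injective_on_finite_extends_to_bijection {V : Type} (A : V -> Prop) (f : V -> V) :
  finite_set A -> (forall x y, A x -> A y -> f x = f y -> x = y) ->
  exists g, bijective_map g /\ forall x, A x -> g x = f x.
Proof.
  intros [l Hl] f_inj.
  destruct (injective_on_list_extends_to_bijection f l) as [g [g_bij g_ext]].
  { intros x y Hx Hy; apply f_inj; apply Hl; assumption. }
  exists g; split; [exact g_bij|].
  intros x Hx; apply g_ext, Hl, Hx.
Qed.

Lemma finite_set_pair {V : Type} (x y : V) : finite_set (fun z => z = x \/ z = y).
Proof.
  exists (x :: y :: nil); intros z; simpl; split.
  - intros [->| ->]; auto.
  - intros [<-|[<-|[]]]; auto.
Qed.

Lemma exists_map_on_pair {V W : Type} (u v : V) (a b : W) :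
  u <> v -> exists f : V -> W, f u = a /\ f v = b.
Proof.
  intros Huv.
  exists (fun z => if excluded_middle_informative (z = u) then a else b); split.
  - destruct (excluded_middle_informative (u = u)); congruence.
  - destruct (excluded_middle_informative (v = u)); congruence.
Qed.

Lemma bijective_map_to_nat {V : Type} :
  countably_infinite V -> exists h : V -> nat, bijective_map h.
Proof.
  intros [e [e_inj e_surj]].
  set (h v := proj1_sig (constructive_indefinite_description _ (e_surj v))).
  assert (eh : forall v, e (h v) = v).
  { intros v; exact (proj2_sig (constructive_indefinite_description _ (e_surj v))). }
  exists h; split.
  - intros x y Exy; rewrite <- (eh x), <- (eh y), Exy; reflexivity.
  - intros n; exists (e n); apply e_inj, eh.
Qed.

Definition complete {V : Type} (adj : V -> V -> Prop) := forall x y, x <> y -> adj x y.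
Definition edgeless {V : Type} (adj : V -> V -> Prop) := forall x y, ~ adj x y.

Lemma global_morph_injective {V : Type} (adj : V -> V -> Prop) (Y : YKind) (g : V -> V) :
  global_morph adj Y g -> forall x y, g x = g y -> x = y.
Proof. destruct Y; intros Hg; apply Hg. Qed.

Lemma global_morph_of_automorphism {V : Type} (adj : V -> V -> Prop) (Y : YKind) (g : V -> V) :
  global_morph adj YA g -> global_morph adj Y g.
Proof.
  intros [[g_inj g_surj] g_adj].
  destruct Y; repeat split; auto; apply g_adj.
Qed.

Lemma XY_homogeneous_of_YA {V : Type} (adj : V -> V -> Prop) (X : XKind) (Y : YKind) :
  XY_homogeneous adj X YA -> XY_homogeneous adj X Y.
Proof.
  intros Hhom A B f HA HB Hf.
  destruct (Hhom A B f HA HB Hf) as [g [Hg g_ext]].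
  exists g; split; [apply global_morph_of_automorphism|]; assumption.
Qed.

Section Homogeneity.

Variables (V : Type) (adj : V -> V -> Prop).
Hypothesis adj_sym : forall x y, adj x y -> adj y x.
Hypothesis adj_irrefl : forall x, ~ adj x x.

Lemma complete_adj_iff : complete adj -> forall x y, adj x y <-> x <> y.
Proof.
  intros Hc x y; split; [intros Hxy ->; exact (adj_irrefl y Hxy)|apply Hc].
Qed.

Lemma local_morph_on_nonedge (X : XKind) (u v : V) (f : V -> V) :
  ~ adj u v -> (X = XM -> f u <> f v) ->
  local_morph adj X (fun z => z = u \/ z = v) (fun z => z = f u \/ z = f v) f.
Proof.
  intros Huv Hf; split; [|split].
  - intros x [->| ->]; auto.
  - intros x y [->| ->] [->| ->] Hxy; exfalso;
      [exact (adj_irrefl u Hxy)|exact (Huv Hxy)|exact (Huv (adj_sym v u Hxy))|exact (adj_irrefl v Hxy)].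
  - destruct X; [exact I|].
    intros x y [->| ->] [->| ->] Exy; auto; exfalso; apply Hf; auto.
Qed.

Lemma H_homogeneous_complete (Y : YKind) :
  XY_homogeneous adj XH Y -> complete adj.
Proof.
  intros Hhom u v Huv; apply NNPP; intros Hn.
  destruct (Hhom _ _ (fun _ => u) (finite_set_pair u v) (finite_set_pair u u))
    as [g [Hg g_ext]].
  { apply local_morph_on_nonedge; [exact Hn|discriminate]. }
  apply Huv, (global_morph_injective adj Y g Hg).
  rewrite !g_ext; auto.
Qed.

Lemma MI_homogeneous_complete_or_edgeless :
  XY_homogeneous adj XM YI -> complete adj \/ edgeless adj.
Proof.
  intros Hhom.
  destruct (classic (exists x y, adj x y)) as [[x [y Hxy]]|Hno].
  2:{ right; intros x y Hxy; apply Hno; eauto. }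
  left; intros u v Huv; apply NNPP; intros Hn.
  assert (Exy : x <> y) by (intros ->; exact (adj_irrefl y Hxy)).
  destruct (exists_map_on_pair u v x y Huv) as [f [fu fv]].
  destruct (Hhom _ _ f (finite_set_pair u v) (finite_set_pair (f u) (f v)))
    as [g [[_ g_adj] g_ext]].
  { apply local_morph_on_nonedge; [exact Hn|rewrite fu, fv; auto]. }
  apply Hn, g_adj; rewrite !g_ext, fu, fv by auto; exact Hxy.
Qed.

Lemma bijection_preserves_adj (g : V -> V) :
  complete adj \/ edgeless adj -> bijective_map g ->
  forall x y, adj x y <-> adj (g x) (g y).
Proof.
  intros [Hc|He] [g_inj _] x y.
  - rewrite !(complete_adj_iff Hc); split; [intros Hxy E; apply Hxy, g_inj, E|congruence].
  - split; intros Hxy; exfalso; eapply He; eauto.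
Qed.

Lemma complete_or_edgeless_MA :
  complete adj \/ edgeless adj -> XY_homogeneous adj XM YA.
Proof.
  intros Hce A B f HA HB [_ [_ f_inj]].
  destruct (injective_on_finite_extends_to_bijection A f HA f_inj) as [g [g_bij g_ext]].
  exists g; split; [split; [exact g_bij|apply bijection_preserves_adj; assumption]|exact g_ext].
Qed.

Lemma complete_local_hom_injective (A B : V -> Prop) (f : V -> V) :
  complete adj -> local_morph adj XH A B f -> local_morph adj XM A B f.
Proof.
  intros Hc [f_maps [f_adj _]]; split; [exact f_maps|split; [exact f_adj|]].
  intros x y Hx Hy Exy; apply NNPP; intros Hxy.
  apply (adj_irrefl (f x)); rewrite Exy at 2; apply f_adj, Hc; assumption.
Qed.

Lemma complete_HA : complete adj -> XY_homogeneous adj XH YA.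
Proof.
  intros Hc A B f HA HB Hf.
  apply (complete_or_edgeless_MA (or_introl Hc) A B f HA HB).
  apply complete_local_hom_injective; assumption.
Qed.

Lemma H_homogeneous_iff_complete (Y : YKind) :
  XY_homogeneous adj XH Y <-> complete adj.
Proof.
  split; [apply H_homogeneous_complete|].
  intros Hc; apply XY_homogeneous_of_YA, complete_HA, Hc.
Qed.

Lemma M_homogeneous_iff_complete_or_edgeless (Y : YKind) :
  Y = YI \/ Y = YA ->
  XY_homogeneous adj XM Y <-> complete adj \/ edgeless adj.
Proof.
  intros HY; split.
  - intros Hhom; apply MI_homogeneous_complete_or_edgeless.
    destruct HY as [->| ->]; [exact Hhom|apply XY_homogeneous_of_YA, Hhom].
  - intros Hce; apply XY_homogeneous_of_YA, complete_or_edgeless_MA, Hce.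
Qed.

Lemma iso_K_omega_iff_complete :
  countably_infinite V -> graph_iso adj K_omega <-> complete adj.
Proof.
  intros HV; split.
  - intros [h [[h_inj _] h_adj]] x y Hxy.
    apply h_adj; intros E; apply Hxy, h_inj, E.
  - intros Hc; destruct (bijective_map_to_nat HV) as [h [h_inj h_surj]].
    exists h; split; [split; assumption|].
    intros x y; unfold K_omega; rewrite (complete_adj_iff Hc).
    split; [intros Hxy E; apply Hxy, h_inj, E|congruence].
Qed.

Lemma iso_I_omega_iff_edgeless :
  countably_infinite V -> graph_iso adj I_omega <-> edgeless adj.
Proof.
  intros HV; split.
  - intros [h [_ h_adj]] x y Hxy; exact (proj1 (h_adj x y) Hxy).
  - intros He; destruct (bijective_map_to_nat HV) as [h h_bij].
    exists h; split; [exact h_bij|].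
    intros x y; unfold I_omega; split; [apply He|intros []].
Qed.

End Homogeneity.

Theorem theorem3p2 (V : Type) (adj : V -> V -> Prop)
  (Hg : is_graph adj) (Hc : countably_infinite V) :
  ((XY_homogeneous adj XH YM <-> XY_homogeneous adj XH YI) /\
   (XY_homogeneous adj XH YI <-> XY_homogeneous adj XH YB) /\
   (XY_homogeneous adj XH YB <-> XY_homogeneous adj XH YA) /\
   (XY_homogeneous adj XH YA <-> graph_iso adj K_omega)) /\
  ((XY_homogeneous adj XM YI <-> XY_homogeneous adj XM YA) /\
   (XY_homogeneous adj XM YA <-> (graph_iso adj K_omega \/ graph_iso adj I_omega))).
Proof.
  destruct Hg as [adj_sym adj_irrefl].
  rewrite !(H_homogeneous_iff_complete V adj adj_sym adj_irrefl).
  rewrite !(M_homogeneous_iff_complete_or_edgeless V adj adj_sym adj_irrefl YI),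
          !(M_homogeneous_iff_complete_or_edgeless V adj adj_sym adj_irrefl YA) by auto.
  rewrite (iso_K_omega_iff_complete V adj adj_irrefl Hc),
          (iso_I_omega_iff_edgeless V adj Hc).
  tauto.
Qed.
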